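(* Let $q$ be a self-join-free Boolean conjunctive query, let $q_0\subseteq q$, let $\mathbf{db}$ be a database, and let $\mathbf{o}$ be a garbage set for $q_0$ in $\mathbf{db}$. If $\mathbf{p}$ is the union of one or more blocks of $\mathbf{o}$, then $\mathbf{o}\setminus\mathbf{p}$ is a garbage set for $q_0$ in $\mathbf{db}\setminus\mathbf{p}$.
   Context: Every relation name has a signature $[n,k]$ ($1\le k\le n$; primary-key positions $1,\dots,k$) and a mode in $\{\mathsf{c},\mathsf{i}\}$. Facts are variable-free atoms; facts are key-equal if same relation name and same primary-key values. A database is a finite set of facts with no two distinct key-equal facts of mode $\mathsf{c}$, all of whose relation names occur in $q$. A block of a set of facts is a maximal subset of pairwise key-equal facts; the block of $A$ in $\mathbf{db}$ is the set of facts of $\mathbf{db}$ key-equal to $A$. A repair of a set of facts is a maximal subset without two distinct key-equal facts. A self-join-free Boolean conjunctive query is a finite set of atoms with distinct relation names; for a fact $A$, $\mathrm{atom}(A)$ is the atom of $q$ with the same relation name. A subset $\mathbf{o}\subseteq\mathbf{db}$ is a garbage set for $q_0$ in $\mathbf{db}$ if (1) for every $A\in\mathbf{o}$, $\mathrm{atom}(A)\in q_0$ and the block of $A$ in $\mathbf{db}$ is included in $\mathbf{o}$; and (2) there is a repair $\mathbf{r}$ of $\mathbf{o}$ such that for every valuation $\theta$ of the variables of $q$, if $\theta(q)\subseteq(\mathbf{db}\setminus\mathbf{o})\cup\mathbf{r}$ then $\theta(q_0)\cap\mathbf{r}=\emptyset$. *)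

From Stdlib Require Import List Arith.
Import ListNotations.
Set Implicit Arguments.

Inductive Mode : Type := ModeC | ModeI.

Record Schema : Type := {
  RName : Type;
  arity : RName -> nat;
  keylen : RName -> nat;         (* k: primary-key positions 1..k *)
  mode : RName -> Mode;
  keylen_pos : forall R, 1 <= keylen R;
  keylen_le : forall R, keylen R <= arity R
}.
Arguments arity {_}. Arguments keylen {_}. Arguments mode {_}.

Section Defs.
Variable S : Schema.
Variables Const Var : Type.

Inductive Term : Type := TVar (v : Var) | TConst (c : Const).

Record Atom : Type := mkAtom { arel : RName S; aargs : list Term }.
Record Fact : Type := mkFact { frel : RName S; fargs : list Const }.

Definition wf_atom (F : Atom) : Prop := length (aargs F) = arity (arel F).
Definition wf_fact (A : Fact) : Prop := length (fargs A) = arity (frel A).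

Definition key_equal (A B : Fact) : Prop :=
  frel A = frel B /\
  firstn (keylen (frel A)) (fargs A) = firstn (keylen (frel B)) (fargs B).

Definition fset := Fact -> Prop.
Definition subset (X Y : fset) : Prop := forall A, X A -> Y A.
Definition setminus (X Y : fset) : fset := fun A => X A /\ ~ Y A.
Definition setunion (X Y : fset) : fset := fun A => X A \/ Y A.
Definition finite_set (X : fset) : Prop := exists l : list Fact, forall A, X A <-> In A l.

Definition sjf_query (q : list Atom) : Prop :=
  NoDup (map (@arel) q) /\ Forall wf_atom q.

Definition database (q : list Atom) (db : fset) : Prop :=
  finite_set db /\
  (forall A, db A -> wf_fact A) /\
  (forall A B, db A -> db B -> key_equal A B -> mode (frel A) = ModeC -> A = B) /\
  (forall A, db A -> exists F, In F q /\ arel F = frel A).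

Definition block_in (db : fset) (A : Fact) : fset := fun B => db B /\ key_equal A B.

Definition pairwise_key_equal (X : fset) : Prop :=
  forall A B, X A -> X B -> key_equal A B.

Definition is_block (X B : fset) : Prop :=
  subset B X /\ pairwise_key_equal B /\
  forall B', subset B B' -> subset B' X -> pairwise_key_equal B' -> subset B' B.

Definition union_of_blocks (X p : fset) : Prop :=
  exists bs : list fset, bs <> [] /\ Forall (is_block X) bs /\
    forall A, p A <-> exists B, In B bs /\ B A.

Definition consistent (X : fset) : Prop :=
  forall A B, X A -> X B -> key_equal A B -> A = B.

Definition is_repair (X r : fset) : Prop :=
  subset r X /\ consistent r /\
  forall r', subset r r' -> subset r' X -> consistent r' -> subset r' r.

Definition subst_term (theta : Var -> Const) (t : Term) : Const :=
  match t with TVar v => theta v | TConst c => c end.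
Definition subst_atom (theta : Var -> Const) (F : Atom) : Fact :=
  mkFact (arel F) (map (subst_term theta) (aargs F)).

Definition val_incl (theta : Var -> Const) (q : list Atom) (X : fset) : Prop :=
  forall F, In F q -> X (subst_atom theta F).

Definition atom_in (q q0 : list Atom) (A : Fact) : Prop :=
  exists F, In F q /\ arel F = frel A /\ In F q0.

Definition garbage_set (q q0 : list Atom) (db o : fset) : Prop :=
  subset o db /\
  (forall A, o A -> atom_in q q0 A /\ subset (block_in db A) o) /\
  exists r, is_repair o r /\
    forall theta : Var -> Const,
      val_incl theta q (setunion (setminus db o) r) ->
      forall F, In F q0 -> ~ r (subst_atom theta F).

End Defs.

(* All that matters about a union of blocks [p] of [o] is that it is closed under
   key-equality inside [o]: then no fact of [p] is key-equal to a fact of [o \ p], so a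
   repair [r] of [o] restricts to the repair [r \ p] of [o \ p]. Since
   ((db \ p) \ (o \ p)) ∪ (r \ p) ⊆ (db \ o) ∪ r, every valuation to be checked for
   [o \ p] was already checked for [o]. *)
From Stdlib Require Import List Classical.

Set Implicit Arguments.

Section KeyClosed.
Variables (S : Schema) (Const : Type).
Implicit Types (A B C : Fact S Const) (X Y p r db o : fset S Const).

Lemma key_equal_sym A B : key_equal A B -> key_equal B A.
Proof. intros [Hrel Hkey]; split; auto. Qed.

Lemma key_equal_trans A B C : key_equal A B -> key_equal B C -> key_equal A C.
Proof. intros [Hrel1 Hkey1] [Hrel2 Hkey2]; split; congruence. Qed.

Definition key_closed_in X p : Prop :=
  forall A C, p A -> X C -> key_equal A C -> p C.

Lemma is_block_key_closed X Bk : is_block X Bk -> key_closed_in X Bk.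
Proof.
  intros [Hsub [Hpw Hmax]] A C HA HC HAC.
  apply (Hmax (fun D => Bk D \/ D = C)); [now left | | | now right].
  - intros D [HD | ->]; auto.
  - intros D E [HD | ->] [HE | ->].
    + now apply Hpw.
    + exact (key_equal_trans (Hpw D A HD HA) HAC).
    + exact (key_equal_trans (key_equal_sym HAC) (Hpw A E HA HE)).
    + split; reflexivity.
Qed.

Lemma union_of_blocks_key_closed X p : union_of_blocks X p -> key_closed_in X p.
Proof.
  intros [bs [_ [Hblocks Hp]]] A C HA HC HAC.
  apply Hp in HA as [Bk [Hin HBk]].
  apply Hp; exists Bk; split; auto.
  rewrite Forall_forall in Hblocks.
  exact (is_block_key_closed (Hblocks Bk Hin) HBk HC HAC).
Qed.

Lemma consistent_setunion X Y :
  consistent X -> consistent Y ->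
  (forall A B, X A -> Y B -> ~ key_equal A B) ->
  consistent (setunion X Y).
Proof.
  intros HX HY Hsep A B [HA | HA] [HB | HB] HAB.
  - now apply HX.
  - now destruct (Hsep A B HA HB).
  - now destruct (Hsep B A HB HA (key_equal_sym HAB)).
  - now apply HY.
Qed.

(* Maximality: a consistent [r'] between [r \ p] and [o \ p], joined with [r] inside [p],
   is a consistent subset of [o] containing [r], hence contained in [r]. *)
Lemma is_repair_setminus o r p :
  is_repair o r -> key_closed_in o p -> is_repair (setminus o p) (setminus r p).
Proof.
  intros [Hro [Hrc Hrmax]] Hp.
  split; [| split].
  - intros A [HA HnA]; split; auto.
  - intros A B [HA _] [HB _]; now apply Hrc.
  - intros r' Hrr' Hr'o Hr'c A HA.
    assert (Hunion : consistent (setunion r' (fun B => r B /\ p B))).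
    { apply consistent_setunion; [exact Hr'c | intros B C [HB _] [HC _]; now apply Hrc |].
      intros B C HB [_ HpC] HBC.
      destruct (Hr'o B HB) as [HoB HnpB].
      exact (HnpB (Hp C B HpC HoB (key_equal_sym HBC))). }
    assert (HrA : r A).
    { apply (Hrmax (setunion r' (fun B => r B /\ p B))); [| | exact Hunion | now left].
      - intros B HB; destruct (classic (p B)) as [HpB | HnpB].
        + right; split; auto.
        + left; apply Hrr'; split; auto.
      - intros B [HB | [HB _]]; [apply Hr'o | apply Hro]; assumption. }
    split; [exact HrA | apply (Hr'o A HA)].
Qed.

Lemma block_in_setminus_subset db p A :
  subset (block_in (setminus db p) A) (block_in db A).
Proof. intros B [[HB _] HAB]; split; auto. Qed.

Lemma setunion_setminus_subset db o p r :
  subset (setunion (setminus (setminus db p) (setminus o p)) (setminus r p))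
         (setunion (setminus db o) r).
Proof.
  intros A [[[HA HnpA] HnoA] | [HrA _]].
  - left; split; auto.
    intro HoA; apply HnoA; split; auto.
  - now right.
Qed.

Lemma val_incl_subset (Var : Type) (theta : Var -> Const) (q : list (Atom S Const Var)) X Y :
  subset X Y -> val_incl theta q X -> val_incl theta q Y.
Proof. intros HXY Hval F HF; exact (HXY _ (Hval F HF)). Qed.

Lemma garbage_set_setminus (Var : Type) (q q0 : list (Atom S Const Var)) db o p :
  garbage_set q q0 db o -> key_closed_in o p ->
  garbage_set q q0 (setminus db p) (setminus o p).
Proof.
  intros [Hodb [Hblocks [r [Hrepair Hgarbage]]]] Hp.
  split; [| split].
  - intros A [HoA HnpA]; split; auto.
  - intros A [HoA HnpA].
    destruct (Hblocks A HoA) as [Hatom Hblock].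
    split; [exact Hatom |].
    intros B HB; split.
    + exact (Hblock B (block_in_setminus_subset HB)).
    + exact (proj2 (proj1 HB)).
  - exists (setminus r p); split; [exact (is_repair_setminus Hrepair Hp) |].
    intros theta Hval F HF [HrF _].
    exact (Hgarbage theta (val_incl_subset (@setunion_setminus_subset db o p r) Hval) F HF HrF).
Qed.

End KeyClosed.

Theorem lemma30 (S : Schema) (Const Var : Type)
  (q q0 : list (Atom S Const Var)) (db o p : fset S Const) :
  sjf_query q ->
  incl q0 q ->
  database q db ->
  garbage_set q q0 db o ->
  union_of_blocks o p ->
  garbage_set q q0 (setminus db p) (setminus o p).
Proof.
  intros _ _ _ Hgarbage Hp.
  exact (garbage_set_setminus Hgarbage (union_of_blocks_key_closed Hp)).
Qed.
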